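(* Let $\mathcal{S}$ be a normal SPN over Boolean variables $X_1,\ldots,X_N$ and let $\mathcal{B}$ be the Bayesian network with ADD CPDs constructed from $\mathcal{S}$ as described in the context. Then $|\mathcal{B}|=O(N|\mathcal{S}|)$.
   Context: SPNs. Let $X_1,\ldots,X_N$ be Boolean variables. An SPN is a finite rooted DAG whose internal nodes are sum and product nodes, each edge $(v,u)$ out of a sum node carrying a weight $w_{v,u}\ge 0$, and whose terminal nodes are indicators $\mathbb{I}_{x_n},\mathbb{I}_{\bar x_n}$ or univariate distribution nodes over some $X_n$ with parameter $p\in[0,1]$. The scope of a terminal node over $X_n$ is $\{X_n\}$; an internal node's scope is the union of its children's scopes. The SPN is over $X_1,\ldots,X_N$ if the root's scope is $\{X_1,\ldots,X_N\}$. It is normal if (1) it is complete (children of each sum node have equal scopes) and decomposable (children of each product node have pairwise disjoint scopes); (2) the weights leaving each sum node are nonnegative and sum to 1; (3) every terminal node is a univariate distribution node and every sum node has scope size at least 2. $|\mathcal{S}|$ is the number of nodes plus edges. Construction. From a normal SPN $\mathcal{S}$ over $X_1,\ldots,X_N$ build a Bayesian network $\mathcal{B}$: its variables are $X_1,\ldots,X_N$ and, for each sum node $v$ with children $u_1,\ldots,u_l$, a hidden variable $H_v$ with values $\{1,\ldots,l\}$; its edges are exactly $H_v\to X$ for each sum node $v$ and each $X\in\mathrm{scope}(v)$. The CPD of $H_v$ is the decision stump ADD $\mathcal{A}_{H_v}$ (root labelled $H_v$, $i$-th edge to a terminal with value $w_{v,u_i}$). The CPD of $X$ is the ADD $\mathcal{A}_X$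 obtained by taking the subgraph of $\mathcal{S}$ induced by the nodes whose scope contains $X$, contracting every product node (each has a unique child there; connect its parents to that child and delete it), turning each sum node $v$ into an ADD node labelled $H_v$ whose $i$-th out-edge goes to the image of its $i$-th child, and keeping each terminal node (a distribution over $X$) as an ADD terminal. The size $|\mathcal{B}|$ is the number of nodes plus edges of the DAG of $\mathcal{B}$ plus the sizes (nodes plus edges) of all ADDs $\mathcal{A}_{H_v}$ and $\mathcal{A}_X$. *)

From HB Require Import structures.
From mathcomp Require Import all_boot all_order all_algebra.
Set Implicit Arguments. Unset Strict Implicit. Unset Printing Implicit Defensive.
Import Order.TTheory GRing.Theory Num.Theory.
Local Open Scope ring_scope.

(* Node kinds: sum, product, indicator I_{x_n} (b = true) / I_{~x_n} (b = false),
   univariate distribution node over X_n with parameter p. *)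
Inductive nkind (N : nat) (R : Type) :=
| NSum | NProd | NInd of 'I_N & bool | NDist of 'I_N & R.
Arguments NSum {N R}. Arguments NProd {N R}.

Definition is_sum N R (k : nkind N R) := if k is NSum then true else false.
Definition is_prod N R (k : nkind N R) := if k is NProd then true else false.
Definition is_dist N R (k : nkind N R) := if k is NDist _ _ then true else false.
Definition is_terminal N R (k : nkind N R) := ~~ is_sum k && ~~ is_prod k.
Definition term_var N R (k : nkind N R) : option 'I_N :=
  match k with NInd n _ => Some n | NDist n _ => Some n | _ => None end.

Record SPN (R : Type) (N : nat) := mkSPN {
  nsz : nat;
  kind : 'I_nsz -> nkind N R;
  children : 'I_nsz -> seq 'I_nsz;
  weight : 'I_nsz -> 'I_nsz -> R;
  root : 'I_nsz }.
Arguments kind {R N} s _. Arguments children {R N} s _. Arguments weight {R N} s _ _. Arguments root {R N} s. Arguments nsz {R N} s.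

Section SPNdefs.
Variables (R : realFieldType) (N : nat) (S : SPN R N).

Definition child_rel : rel 'I_(nsz S) := fun v u => u \in children S v.

(* scope(v): the variables of the terminal nodes below v (equivalently, the
   union of the children's scopes, terminals having scope {X_n}). *)
Definition scope (v : 'I_(nsz S)) : {set 'I_N} :=
  [set x | [exists t, connect child_rel v t && (term_var (kind S t) == Some x)]].

Definition is_SPN : Prop :=
  [/\ (forall v, uniq (children S v)),
      (forall v u, u \in children S v -> ~~ connect child_rel u v),
      (forall v, connect child_rel (root S) v),
      (forall v, is_terminal (kind S v) = (children S v == [::])) &
      (forall v u, is_sum (kind S v) -> u \in children S v -> 0 <= weight S v u)].

Definition over_all_vars : Prop := scope (root S) = [set: 'I_N].

Definition complete : Prop :=
  forall v, is_sum (kind S v) ->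
    forall u u', u \in children S v -> u' \in children S v -> scope u = scope u'.

Definition decomposable : Prop :=
  forall v, is_prod (kind S v) ->
    forall u u', u \in children S v -> u' \in children S v -> u != u' ->
      [disjoint scope u & scope u'].

Definition normal : Prop :=
  [/\ complete, decomposable,
      (forall v, is_sum (kind S v) ->
         (forall u, u \in children S v -> 0 <= weight S v u) /\
         \sum_(u <- children S v) weight S v u = 1),
      (forall v, is_terminal (kind S v) ->
         exists n p, kind S v = NDist n p /\ 0 <= p <= 1) &
      (forall v, is_sum (kind S v) -> 2 <= #|scope v|)%N].

Definition spn_size : nat := (nsz S + \sum_(v : 'I_(nsz S)) size (children S v))%N.

End SPNdefs.
Arguments scope {R N} S v.
Arguments child_rel {R N} S.

(* An ADD: a DAG on a set of nodes [anodes] (inside a finite carrier type),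
   internal nodes labelled by a variable (inl), terminals by a value (inr);
   the i-th out-edge of an internal node goes to the i-th element of
   [achildren]. *)
Record ADD (L V : Type) := mkADD {
  anode : finType;
  anodes : {set anode};
  alabel : anode -> L + V;
  achildren : anode -> seq anode;
  aroot : anode }.
Arguments anodes {L V} a. Arguments alabel {L V} a _. Arguments achildren {L V} a _. Arguments aroot {L V} a. Arguments anode {L V} a.

Definition add_size L V (A : ADD L V) : nat :=
  (#|anodes A| + \sum_(u in anodes A) size (achildren A u))%N.

Section BNdefs.
Variables (R : realFieldType) (N : nat) (S : SPN R N).
Local Notation node := 'I_(nsz S).

(* CPD of the hidden variable H_v: decision stump with root labelled H_v and
   i-th edge to a terminal of value w_{v,u_i}. *)
Definition stump_ADD (v : node) : ADD node R :=
  let l := size (children S v) in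
  @mkADD node R (option 'I_l) [set: option 'I_l]
    (fun o => match o with
              | None => inl v
              | Some i => inr (weight S v (nth v (children S v) i)) end)
    (fun o => if o is None then [seq Some i | i <- enum 'I_l] else [::])
    None.

(* Contraction of product nodes in the subgraph of nodes whose scope contains
   x: a product node is replaced by its (unique) child containing x in its
   scope, iterated until a non-product node is reached. *)
Definition contract_step (x : 'I_N) (w : node) : node :=
  if is_prod (kind S w) then head w [seq c <- children S w | x \in scope S c]
  else w.
Definition contract_img (x : 'I_N) (u : node) : node :=
  iter (nsz S) (contract_step x) u.

Definition var_ADD (x : 'I_N) : ADD node R :=
  @mkADD node R node
    [set v | (x \in scope S v) && ~~ is_prod (kind S v)]
    (fun v => match kind S v with NDist _ p => inr p | _ => inl v end)
    (fun v => if is_sum (kind S v)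
              then [seq contract_img x u | u <- children S v] else [::])
    (contract_img x (root S)).

(* The DAG of B: nodes X_1..X_N and H_v (v sum node); edges H_v -> X for
   X in scope(v). *)
Definition bn_dag_size : nat :=
  (N + #|[set v : node | is_sum (kind S v)]|
     + \sum_(v : node | is_sum (kind S v)) #|scope S v|)%N.

Definition bn_size : nat :=
  (bn_dag_size
   + \sum_(v : node | is_sum (kind S v)) add_size (stump_ADD v)
   + \sum_(x : 'I_N) add_size (var_ADD x))%N.

End BNdefs.

From Pilot Require Import Defs.
From HB Require Import structures.
From mathcomp Require Import all_boot all_order all_algebra.
From mathcomp Require Import zify.

Set Implicit Arguments.
Unset Strict Implicit.
Unset Printing Implicit Defensive.

(* Every part of B is charged to nodes and edges of S: the DAG of B has the N
   variables plus, for each sum node v, one hidden variable and |scope v| <= N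
   edges; the stump of H_v has one node and one edge per child of v; and the
   ADD of each X_x is a quotient of a subgraph of S, so it has at most |S| nodes
   and edges.  Summing gives |B| <= N + (N + 1) |S| + 2 |S| + N |S| <= 6 N |S|
   once N > 0, while for N = 0 normality (sum nodes have scope size >= 2)
   leaves no sum nodes, hence |B| = 0. *)

Lemma sum_nat_cond_le (T : finType) (P : pred T) (f : T -> nat) :
  (\sum_(t | P t) f t <= \sum_t f t)%N.
Proof. by rewrite big_mkcond /=; apply: leq_sum => t _; case: (P t). Qed.

Section BNSize.
Variables (R : realFieldType) (N : nat) (S : SPN R N).

Lemma add_size_stump_ADD v :
  add_size (stump_ADD v) = (size (children S v)).*2.+1.
Proof.
rewrite /add_size /= cardsT card_option card_ord.
rewrite (eq_bigl predT) => [|u]; last by rewrite in_setT.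
rewrite (bigD1 None) //= big1 => [|[]//].
by rewrite size_map size_enum_ord; lia.
Qed.

Lemma add_size_var_ADD x : (add_size (var_ADD S x) <= spn_size S)%N.
Proof.
rewrite /add_size /spn_size /=; apply: leq_add.
  by rewrite -[leqRHS]card_ord max_card.
rewrite big_mkcond /=; apply: leq_sum => v _; case: (v \in _) => //.
by case: ifP; rewrite ?size_map.
Qed.

Lemma sum_stump_size_le :
  (\sum_(v | is_sum (kind S v)) add_size (stump_ADD v) <= 2 * spn_size S)%N.
Proof.
apply: leq_trans (sum_nat_cond_le _ _) _.
under eq_bigr => v _ do rewrite add_size_stump_ADD -addn1 -muln2.
by rewrite big_split -big_distrl sum_nat_const card_ord /spn_size /=; lia.
Qed.

Lemma bn_dag_size_le : (bn_dag_size S <= N + nsz S * N.+1)%N.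
Proof.
rewrite /bn_dag_size -addnA leq_add2l mulnS leq_add //.
  by rewrite -[leqRHS]card_ord max_card.
apply: leq_trans (sum_nat_cond_le _ _) _.
rewrite -[X in (_ <= X * N)%N](card_ord (nsz S)) -sum_nat_const.
by apply: leq_sum => v _; rewrite -[leqRHS](card_ord N) max_card.
Qed.

Lemma bn_size_le :
  (bn_size S <= N + nsz S * N.+1 + 2 * spn_size S + N * spn_size S)%N.
Proof.
rewrite /bn_size; apply: leq_add; first exact: leq_add bn_dag_size_le sum_stump_size_le.
rewrite -[X in (_ <= X * _)%N](card_ord N) -sum_nat_const.
by apply: leq_sum => x _; apply: add_size_var_ADD.
Qed.

End BNSize.

Lemma normal_sum_nvars_ge2 (R : realFieldType) (N : nat) (S : SPN R N) v :
  normal S -> is_sum (kind S v) -> (2 <= N)%N.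
Proof.
case=> _ _ _ _ scope_ge2 /scope_ge2 /leq_trans; apply.
by rewrite -[leqRHS](card_ord N) max_card.
Qed.

Lemma bn_size_nullary (R : realFieldType) (S : SPN R 0) :
  normal S -> bn_size S = 0%N.
Proof.
move=> normS; have no_sum v : is_sum (kind S v) = false.
  by apply/negP => /(normal_sum_nvars_ge2 normS).
rewrite /bn_size /bn_dag_size big_ord0 !big_pred0 // !addn0.
by apply/eqP; rewrite cards_eq0; apply/eqP/setP => v; rewrite !inE no_sum.
Qed.

Theorem theorem5 :
  exists C : nat,
    forall (R : realFieldType) (N : nat) (S : SPN R N),
      is_SPN S -> over_all_vars S -> normal S ->
      (bn_size S <= C * N * spn_size S)%N.
Proof.
exists 6 => R [|n] S _ _ normS; first by rewrite bn_size_nullary.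
have nodes_pos : (0 < nsz S)%N := leq_ltn_trans (leq0n _) (ltn_ord (Defs.root S)).
have nodes_le : (nsz S <= spn_size S)%N by apply: leq_addr.
have := leq_mul nodes_le (leqnn n.+2); have := bn_size_le S; nia.
Qed.
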